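(* The category $\mathsf{Stone}^{\mathsf{R}}$ is equivalent to the category $\mathsf{BA}^\mathsf{S}$. The equivalence is given by the functor $\mathsf{Clop}\colon\mathsf{Stone}^{\mathsf{R}}\to\mathsf{BA}^\mathsf{S}$ sending a Stone space $X$ to the boolean algebra $\mathsf{Clop}(X)$ of its clopen subsets and a closed relation $R\colon X\to Y$ to the subordination $S_R\colon\mathsf{Clop}(X)\to\mathsf{Clop}(Y)$ with $U\mathrel{S_R}V\iff R[U]\subseteq V$, and the functor $\mathsf{Ult}\colon\mathsf{BA}^\mathsf{S}\to\mathsf{Stone}^{\mathsf{R}}$ sending a boolean algebra $A$ to its Stone space $\mathsf{Ult}(A)$ of ultrafilters and a subordination $S\colon A\to B$ to the closed relation $R_S\colon\mathsf{Ult}(A)\to\mathsf{Ult}(B)$ with $x\mathrel{R_S}y\iff S[x]\subseteq y$.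
   Context: A Stone space is a zero-dimensional compact Hausdorff space. A relation $R\subseteq X\times Y$ between topological spaces is closed if it is a closed subset of $X\times Y$. For $F\subseteq X$, $R[F]=\{y\mid \exists x\in F,\ x\mathrel{R}y\}$. $\mathsf{Stone}^{\mathsf{R}}$ is the category of Stone spaces and closed relations, with identity relations as identities and relational composition. A subordination relation from a boolean algebra $A$ to a boolean algebra $B$ is a relation $S\subseteq A\times B$ such that for $a,b\in A$, $c,d\in B$: (S1) $0\mathrel{S}0$ and $1\mathrel{S}1$; (S2) $a\mathrel{S}c$ and $b\mathrel{S}c$ imply $(a\vee b)\mathrel{S}c$; (S3) $a\mathrel{S}c$ and $a\mathrel{S}d$ imply $a\mathrel{S}(c\wedge d)$; (S4) $a\le b$, $b\mathrel{S}c$, $c\le d$ imply $a\mathrel{S}d$. $\mathsf{BA}^\mathsf{S}$ is the category of boolean algebras and subordination relations; the identity on $A$ is $\le_A$ and composition is relational composition ($a\mathrel{(S_2\circ S_1)}c$ iff $\exists b$ with $a\mathrel{S_1}b\mathrel{S_2}c$). $S[x]=\{b\mid\exists a\in x,\ a\mathrel{S}b\}$. *)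

From HB Require Import structures.
From mathcomp Require Import all_boot all_order.
From mathcomp Require Import all_classical.
From mathcomp Require Import topology.

Set Implicit Arguments.
Unset Strict Implicit.
Unset Printing Implicit Defensive.

Import Order.TTheory.
Local Open Scope classical_set_scope.

(** relational composition, written as in the paper: [rel_comp R2 R1]
    is "R2 o R1", i.e. a (R2 o R1) c iff exists b, a R1 b and b R2 c. *)
Definition rel_comp (T1 T2 T3 : Type) (R2 : T2 -> T3 -> Prop)
  (R1 : T1 -> T2 -> Prop) : T1 -> T3 -> Prop :=
  fun a c => exists b, R1 a b /\ R2 b c.

Definition rel_eq (T1 T2 : Type) (R R' : T1 -> T2 -> Prop) : Prop :=
  forall a b, R a b <-> R' a b.

Definition rel_img (T1 T2 : Type) (R : T1 -> T2 -> Prop) (F : set T1) : set T2 :=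
  [set y | exists2 x, F x & R x y].

Definition zero_dim (X : topologicalType) : Prop :=
  forall (U : set X) (x : X), open U -> U x ->
    exists V : set X, [/\ clopen V, V x & V `<=` U].

Definition stone_space (X : topologicalType) : Prop :=
  [/\ compact [set: X], hausdorff_space X & zero_dim X].

Definition closed_rel (X Y : topologicalType) (R : X -> Y -> Prop) : Prop :=
  closed [set p : X * Y | R p.1 p.2].

Definition rel_id (T : Type) : T -> T -> Prop := fun x y => x = y.

Definition stone_iso (X Y : topologicalType) (R : X -> Y -> Prop) : Prop :=
  closed_rel R /\
  exists R' : Y -> X -> Prop, [/\ closed_rel R',
     rel_eq (rel_comp R' R) (@rel_id X) & rel_eq (rel_comp R R') (@rel_id Y)].

(* Boolean algebras are MathComp's complemented distributive lattices  *)
(* with top and bottom ([ctbDistrLatticeType]).                        *)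

(** identity morphism of BA^S : the order <=_A *)
Definition ba_le d (A : ctbDistrLatticeType d) : A -> A -> Prop :=
  fun a b => (a <= b)%O.

Definition subordination d1 (A : ctbDistrLatticeType d1)
  d2 (B : ctbDistrLatticeType d2) (S : A -> B -> Prop) : Prop :=
  [/\ S \bot%O \bot%O /\ S \top%O \top%O,
      (forall (a b : A) (c : B), S a c -> S b c -> S (a `|` b)%O c),
      (forall (a : A) (c d : B), S a c -> S a d -> S a (c `&` d)%O) &
      (forall (a b : A) (c d : B), (a <= b)%O -> S b c -> (c <= d)%O -> S a d)].

Definition ba_iso d1 (A : ctbDistrLatticeType d1)
  d2 (B : ctbDistrLatticeType d2) (S : A -> B -> Prop) : Prop :=
  subordination S /\
  exists S' : B -> A -> Prop, [/\ subordination S',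
     rel_eq (rel_comp S' S) (@ba_le _ A) & rel_eq (rel_comp S S') (@ba_le _ B)].

Fact clop_display : Order.disp_t. Proof. exact: Order.Disp tt tt. Qed.

Section Clop.
Variable X : topologicalType.

Definition clopenb : {pred set X} := fun U => `[< clopen U >].

Record clop := Clop { clop_val :> set X; clop_prop : clopenb clop_val }.

HB.instance Definition _ := [isSub for clop_val].
HB.instance Definition _ := [Choice of clop by <:].

Fact clopenb_meet : meet_closed clopenb.
Proof.
move=> U V; rewrite !inE /clopenb => cU cV.
rewrite meetEset; exact (clopenI cU cV).
Qed.

Fact clopenb_join : join_closed clopenb.
Proof.
move=> U V; rewrite !inE /clopenb => cU cV.
rewrite joinEset; exact (clopenU cU cV).
Qed.

Fact clopenb_bot : (\bot%O : set X) \in clopenb.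
Proof. rewrite inE botEset; exact: clopen0. Qed.

Fact clopenb_top : (\top%O : set X) \in clopenb.
Proof. rewrite inE topEset; exact: clopenT. Qed.

HB.instance Definition _ := Order.SubChoice_isTBSubLattice.Build
  set_display (set X) clopenb clop_display clop
  clopenb_meet clopenb_join clopenb_bot clopenb_top.

Fact clop_meetUl : @left_distributive clop clop Order.meet Order.join.
Proof.
move=> U V W; apply: val_inj => /=.
exact: meetUl.
Qed.

HB.instance Definition _ :=
  Order.Lattice_Meet_isDistrLattice.Build clop_display clop clop_meetUl.

Fact clopenb_compl (U : clop) : clopenb (~` (clop_val U)).
Proof.
case: U => U /= /asboolP cU; apply/asboolP; exact: (clopenC U cU).
Qed.

Definition clop_compl (U : clop) : clop := Clop (clopenb_compl U).

Fact clop_joinxC (U : clop) : (U `|` clop_compl U)%O = \top%O.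
Proof.
apply: val_inj => /=.
by rewrite joinEset topEset setUv.
Qed.

Fact clop_meetxC (U : clop) : (U `&` clop_compl U)%O = \bot%O.
Proof.
apply: val_inj => /=.
by rewrite meetEset botEset setICr.
Qed.

HB.instance Definition _ := Order.TBDistrLattice_hasComplement.Build
  clop_display clop clop_joinxC clop_meetxC.

End Clop.

Section Ult.
Variables (d : Order.disp_t) (A : ctbDistrLatticeType d).

Definition ba_filter (x : set A) : Prop :=
  [/\ x \top%O,
      (forall a b, x a -> (a <= b)%O -> x b) &
      (forall a b, x a -> x b -> x (a `&` b)%O)].

Definition ba_ultrafilter (x : set A) : Prop :=
  [/\ ba_filter x, ~ x \bot%O &
      forall y : set A, ba_filter y -> ~ y \bot%O -> x `<=` y -> y = x].

Definition ultb : {pred set A} := fun x => `[< ba_ultrafilter x >].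

Record ult := Ult { ult_val :> set A; ult_prop : ultb ult_val }.

HB.instance Definition _ := [isSub for ult_val].
HB.instance Definition _ := [Choice of ult by <:].

(** Stone topology: generated by the (sub)base of sets
    { x in Ult(A) | a in x }, a in A (indexed through [Some a]). *)
Definition ult_subbase (o : option A) : set ult :=
  if o is Some a then [set x : ult | ult_val x a] else setT.

HB.instance Definition _ := isSubBaseTopological.Build ult
  (range (@Some A)) ult_subbase.

End Ult.

Definition S_of (X Y : topologicalType) (R : X -> Y -> Prop) :
  clop X -> clop Y -> Prop :=
  fun U V => rel_img R (clop_val U) `<=` clop_val V.

Definition R_of d1 (A : ctbDistrLatticeType d1) d2 (B : ctbDistrLatticeType d2)
  (S : A -> B -> Prop) : ult A -> ult B -> Prop :=
  fun x y => rel_img S (ult_val x) `<=` ult_val y.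

(* An ultrafilter of a Boolean algebra is prime, and Zorn's lemma extends any
   filter to an ultrafilter avoiding a given disjoint ideal.  Hence
   [a |-> {x | a \in x}] is an order embedding of [A] into the clopens of
   [Ult A], onto by compactness, and in a Stone space [X] compactness plus
   zero-dimensionality make [x |-> {U clopen | x \in U}] a bijection
   [X -> Ult (Clop X)] with closed graph.  The two natural isomorphisms are
   the relations induced by these maps.  The same ideal-avoiding extension
   gives [R_(S2 o S1) = R_S2 o R_S1] and [a S c <-> R_S[a] `<=` c]; dually,
   closed relations between compact Hausdorff spaces map closed sets to closed
   sets, and disjoint closed sets of a Stone space are separated by a clopen
   set, which gives [S_(R2 o R1) = S_R2 o S_R1] and naturality in [X]. *)

From HB Require Import structures.
From mathcomp Require Import all_boot all_order.
From mathcomp Require Import all_classical.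
From mathcomp Require Import topology.
From mathcomp Require unstable.
Import Order.Theory.
Local Open Scope classical_set_scope.

Set Implicit Arguments.
Unset Strict Implicit.
Unset Printing Implicit Defensive.

(** * Filters and ultrafilters of a Boolean algebra *)

Section BooleanFilters.
Variables (d : Order.disp_t) (A : ctbDistrLatticeType d).
Implicit Types (a b c : A) (x y F I : set A).

Definition ba_ideal I : Prop :=
  [/\ I \bot%O, (forall a b, I b -> (a <= b)%O -> I a) &
      (forall a b, I a -> I b -> I (a `|` b)%O)].

Lemma ba_filterT x : ba_filter x -> x \top%O.
Proof. by case. Qed.

Lemma ba_filterS x a b : ba_filter x -> x a -> (a <= b)%O -> x b.
Proof. by case=> _ + _; apply. Qed.

Lemma ba_filterI x a b : ba_filter x -> x a -> x b -> x (a `&` b)%O.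
Proof. by case=> _ _; apply. Qed.

Lemma ba_filterIE x a b : ba_filter x -> x (a `&` b)%O <-> x a /\ x b.
Proof.
move=> fx; split; last by case; exact: ba_filterI.
by move=> xab; split; apply: ba_filterS xab _; rewrite ?leIl ?leIr.
Qed.

Lemma ba_idealS I a b : ba_ideal I -> I b -> (a <= b)%O -> I a.
Proof. by case=> _ + _; apply. Qed.

Lemma ba_idealU I a b : ba_ideal I -> I a -> I b -> I (a `|` b)%O.
Proof. by case=> _ _; apply. Qed.

Definition upset a : set A := [set b | (a <= b)%O].
Definition downset a : set A := [set b | (b <= a)%O].

Lemma upset_filter a : ba_filter (upset a).
Proof.
split; first exact: lex1.
- by move=> b c ab bc; exact: le_trans bc.
- by move=> b c ab ac; rewrite /upset /= lexI ab ac.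
Qed.

Lemma downset_ideal a : ba_ideal (downset a).
Proof.
split; first exact: le0x.
- by move=> b c cb bc; exact: le_trans cb.
- by move=> b c ba ca; rewrite /downset /= leUx ba ca.
Qed.

Definition filter_adjoin x a : set A := [set e | exists2 c, x c & (c `&` a <= e)%O].

Lemma filter_adjoin_filter x a : ba_filter x -> ba_filter (filter_adjoin x a).
Proof.
move=> fx; split.
- by exists \top%O; [exact: ba_filterT|exact: lex1].
- by move=> e f [c xc ce] ef; exists c => //; exact: le_trans ef.
- move=> e f [c xc ce] [c' xc' c'f]; exists (c `&` c')%O; first exact: ba_filterI.
  rewrite lexI; apply/andP; split.
    by apply: le_trans ce; rewrite leI2 // leIl.
  by apply: le_trans c'f; rewrite leI2 // leIr.
Qed.

Lemma filter_adjoin_sub x a : ba_filter x -> x `<=` filter_adjoin x a.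
Proof. by move=> fx e xe; exists e => //; exact: leIl. Qed.

Lemma filter_adjoin_mem x a : ba_filter x -> filter_adjoin x a a.
Proof. by move=> fx; exists \top%O; [exact: ba_filterT|rewrite meet1x]. Qed.

Lemma ba_uf_filter x : ba_ultrafilter x -> ba_filter x.
Proof. by case. Qed.

Lemma ba_uf_proper x : ba_ultrafilter x -> ~ x \bot%O.
Proof. by case. Qed.

Lemma ba_uf_prime x a : ba_ultrafilter x -> x a \/ x (~` a)%O.
Proof.
move=> ux; have fx := ba_uf_filter ux.
have [xna|nxna] := pselect (x (~` a)%O); first by right.
left; have [_ _ maxx] := ux.
suff <- : filter_adjoin x a = x by exact: filter_adjoin_mem.
apply: maxx; [exact: filter_adjoin_filter| |exact: filter_adjoin_sub].
case=> c xc; rewrite lex0 => /eqP cab; apply: nxna; apply: (ba_filterS fx xc).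
by rewrite -disj_leC cab eqxx.
Qed.

Lemma ba_ufC x a : ba_ultrafilter x -> x (~` a)%O <-> ~ x a.
Proof.
move=> ux; split; last by case: (ba_uf_prime a ux).
move=> xna xa; apply: (ba_uf_proper ux); rewrite -(meetxC a).
exact: ba_filterI (ba_uf_filter ux) xa xna.
Qed.

Lemma ba_ufU x a b : ba_ultrafilter x -> x (a `|` b)%O -> x a \/ x b.
Proof.
move=> ux xab; have [xa|xna] := ba_uf_prime a ux; first by left.
have [xb|xnb] := ba_uf_prime b ux; first by right.
exfalso; apply: (ba_uf_proper ux).
have := ba_filterI (ba_uf_filter ux) xab (ba_filterI (ba_uf_filter ux) xna xnb).
by rewrite -complU meetxC.
Qed.

Lemma ba_uf_compl_ideal x : ba_ultrafilter x -> ba_ideal (~` x).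
Proof.
move=> ux; split; first exact: ba_uf_proper.
- by move=> a b nxb ab xa; apply: nxb; exact: ba_filterS (ba_uf_filter ux) xa ab.
- by move=> a b nxa nxb /(ba_ufU ux) [].
Qed.

Lemma prime_ba_ultrafilter x : ba_filter x -> ~ x \bot%O ->
  (forall a, x a \/ x (~` a)%O) -> ba_ultrafilter x.
Proof.
move=> fx nxb prime; split => // y fy nyb sxy; apply/seteqP; split => // b yb.
have [//|xnb] := prime b; exfalso; apply: nyb; rewrite -(meetxC b).
by apply: ba_filterI fy yb _; exact: sxy.
Qed.

Lemma ba_filter_chain_union F (C : set (set A)) :
  ba_filter F -> (forall X, C X -> ba_filter (F `|` X)) -> total_on C subset ->
  ba_filter (F `|` \bigcup_(X in C) X).
Proof.
move=> fF fC tC.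
have meetX X a b : C X -> (F `|` X) a -> (F `|` X) b ->
    (F `|` \bigcup_(X in C) X) (a `&` b)%O.
  by move=> CX Xa Xb; case: (ba_filterI (fC X CX) Xa Xb) => ?; [left|right; exists X].
split; first by left; exact: ba_filterT.
- move=> a b [Fa|[X CX Xa]] ab; first by left; exact: ba_filterS Fa ab.
  by case: (ba_filterS (fC X CX) (or_intror Xa) ab) => ?; [left|right; exists X].
- move=> a b [Fa|[X CX Xa]] [Fb|[Y CY Yb]].
  + by left; exact: ba_filterI.
  + by apply: (meetX Y) => //; [left|right].
  + by apply: (meetX X) => //; [right|left].
  + have [XY|YX] := tC X Y CX CY.
      by apply: (meetX Y) => //; right => //; exact: XY.
    by apply: (meetX X) => //; right => //; exact: YX.
Qed.

(* Zorn's lemma is applied to the sets [G] with [F `|` G] a filter, because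
   the union of the empty chain must be admissible too. *)
Lemma ba_filter_max_disjoint F I : ba_filter F -> ba_ideal I ->
  (forall a, F a -> ~ I a) ->
  exists m, [/\ ba_filter m, F `<=` m, (forall a, m a -> ~ I a) &
    forall y, ba_filter y -> (forall a, y a -> ~ I a) -> m `<=` y -> y = m].
Proof.
move=> fF iI dFI.
pose P G := ba_filter (F `|` G) /\ forall a, (F `|` G) a -> ~ I a.
have [M [[fM dM] maxM]] : exists M, P M /\ forall G, M `<` G -> ~ P G.
  apply: Zorn_bigcup => C CP tC; split.
    by apply: ba_filter_chain_union => // X /CP [].
  move=> a [Fa|[X CX Xa]]; first exact: dFI.
  by have [_] := CP X CX; apply; right.
exists (F `|` M); split => //.
move=> y fy dy My; apply/seteqP; split => //; apply: contrapT => nyM.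
have Fy : F `|` y = y by apply/setUidPr => a Fa; apply: My; left.
apply: (maxM y); last by rewrite /P Fy.
split; first by move=> a Ma; apply: My; right.
by move=> yM; apply: nyM => a ya; right; exact: yM.
Qed.

Lemma ba_ultrafilter_ext F I : ba_filter F -> ba_ideal I ->
  (forall a, F a -> ~ I a) ->
  exists z, [/\ ba_ultrafilter z, F `<=` z & forall a, z a -> ~ I a].
Proof.
move=> fF iI dFI; have [m [fm Fm dm maxm]] := ba_filter_max_disjoint fF iI dFI.
exists m; split => //; apply: prime_ba_ultrafilter => //.
  by move=> mb; case: iI => I0 _ _; exact: dm mb I0.
move=> a; apply: contrapT => /not_orP [nma nmna].
(* each of [m + a] and [m + ~ a] meets [I], hence so does [m] *)
have meetI e : ~ m e -> exists2 i, filter_adjoin m e i & I i.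
  move=> nme; apply: contrapT => /forall2NP dI; apply: nme.
  rewrite -(maxm (filter_adjoin m e)); last exact: filter_adjoin_sub.
  - exact: filter_adjoin_mem.
  - exact: filter_adjoin_filter.
  - by move=> i ei Ii; case: (dI i).
have [i [c mc ci] Ii] := meetI a nma.
have [i' [c' mc' c'i'] Ii'] := meetI _ nmna.
apply: (dm (c `&` c')%O); first exact: ba_filterI.
apply: (ba_idealS iI (ba_idealU iI Ii Ii')).
apply: (@le_trans _ _ ((c `&` c') `&` (a `|` ~` a))%O); first by rewrite joinxC meetx1.
rewrite meetUr; apply: leU2.
  by apply: le_trans ci; apply: leI2 => //; exact: leIl.
by apply: le_trans c'i'; apply: leI2 => //; exact: leIr.
Qed.

End BooleanFilters.

(** * The Stone space of ultrafilters *)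

Section UltrafilterSpace.
Variables (d : Order.disp_t) (A : ctbDistrLatticeType d).
Implicit Types (a b c : A) (F I : set A).

Lemma ultP (x : ult A) : ba_ultrafilter (ult_val x).
Proof. exact/asboolP/ult_prop. Qed.

Definition mk_ult (z : set A) (uz : ba_ultrafilter z) : ult A := Ult (asboolT uz).

Lemma ult_le_eq (x y : ult A) : ult_val x `<=` ult_val y -> x = y.
Proof.
move=> xy; apply: val_inj; have [_ _ maxx] := ultP x; apply: esym; apply: maxx => //.
  exact: ba_uf_filter (ultP y).
exact: ba_uf_proper (ultP y).
Qed.

Lemma ult_ext F I : ba_filter F -> ba_ideal I -> (forall a, F a -> ~ I a) ->
  exists z : ult A, F `<=` ult_val z /\ forall a, ult_val z a -> ~ I a.
Proof.
move=> fF iI dFI; have [z [uz Fz dz]] := ba_ultrafilter_ext fF iI dFI.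
by exists (mk_ult uz).
Qed.

Lemma ult_sep a b : ~ (a <= b)%O -> exists z : ult A, ult_val z a /\ ~ ult_val z b.
Proof.
move=> nab; have [|z [az dz]] := ult_ext (upset_filter a) (downset_ideal b).
  by move=> e ae eb; apply: nab; exact: le_trans eb.
by exists z; split; [apply: az; exact: lexx|move=> zb; apply: (dz b zb); exact: lexx].
Qed.

Lemma ult_ext_proper F : ba_filter F -> ~ F \bot%O ->
  exists z : ult A, F `<=` ult_val z.
Proof.
move=> fF nFb; have [|z [Fz _]] := ult_ext fF (downset_ideal \bot%O).
  by move=> e Fe; rewrite /downset /= lex0 => /eqP e0; apply: nFb; rewrite -e0.
by exists z.
Qed.

Definition stone_set a : set (ult A) := [set x | ult_val x a].

Lemma stone_setI a b : stone_set (a `&` b)%O = stone_set a `&` stone_set b.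
Proof.
by apply/seteqP; split => x; rewrite /stone_set /= (ba_filterIE _ _ (ba_uf_filter (ultP x))).
Qed.

Lemma stone_setC a : stone_set (~` a)%O = ~` stone_set a.
Proof. by apply/seteqP; split => x; rewrite /stone_set /= (ba_ufC _ (ultP x)). Qed.

Lemma stone_setT : stone_set \top%O = setT.
Proof. by apply/seteqP; split => x // _; exact: ba_filterT (ba_uf_filter (ultP x)). Qed.

Lemma stone_set0 : stone_set \bot%O = set0.
Proof. by apply/seteqP; split => x // /(ba_uf_proper (ultP x)). Qed.

Lemma stone_set_subset a b : stone_set a `<=` stone_set b <-> (a <= b)%O.
Proof.
split => [sab|ab x xa]; last exact: ba_filterS (ba_uf_filter (ultP x)) xa ab.
by apply: contrapT => /ult_sep [z [za nzb]]; apply: nzb; exact: sab.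
Qed.

Lemma ult_openE (W : set (ult A)) : open W <->
  exists2 D, D `<=` finI_from (range (@Some A)) (@ult_subbase _ A) &
    \bigcup_(i in D) i = W.
Proof. by []. Qed.

Lemma stone_set_open a : open (stone_set a).
Proof.
apply/ult_openE; exists [set stone_set a]; last by rewrite bigcup_set1.
move=> _ ->; apply: (@finI_from1 _ _ _ (@ult_subbase _ A) (Some a)).
by exists a.
Qed.

Lemma stone_set_clopen a : clopen (stone_set a).
Proof. by split; [|rewrite -openC -stone_setC]; exact: stone_set_open. Qed.

Lemma finI_subbase_stone_set (s : seq (option A)) :
  exists c, forall x, (forall i, i \in s -> ult_subbase i x) <-> stone_set c x.
Proof.
elim: s => [|[a|] s [c IH]].
- by exists \top%O => x; rewrite stone_setT; split => // _ i; rewrite in_nil.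
- exists (a `&` c)%O => x; rewrite stone_setI; split.
    move=> h; split; first by apply: (h (Some a)); rewrite mem_head.
    by apply/IH => i iS; apply: h; rewrite in_cons iS orbT.
  by case=> xa /IH h i; rewrite in_cons => /orP [/eqP -> //|]; exact: h.
- exists c => x; split.
    by move=> h; apply/IH => i iS; apply: h; rewrite in_cons iS orbT.
  by move=> /IH h i; rewrite in_cons => /orP [/eqP -> //|]; exact: h.
Qed.

Lemma stone_set_basis (W : set (ult A)) x : open W -> W x ->
  exists c, stone_set c x /\ stone_set c `<=` W.
Proof.
move=> /ult_openE [D sD <-] [B /[dup] DB /sD [s _ sB] Bx].
have [c Hc] := finI_subbase_stone_set (finmap.enum_fset s).
exists c; split; first by apply/Hc => i si; rewrite -sB in Bx; exact: Bx.
by move=> y /Hc yc; exists B => //; rewrite -sB => i si; exact: yc.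
Qed.

Lemma ult_hausdorff : hausdorff_space (ult A).
Proof.
rewrite open_hausdorff => x y /eqP nxy.
have [a [xa nya]] : exists a, ult_val x a /\ ~ ult_val y a.
  apply: contrapT => /forallNP nsep; apply: nxy; apply: ult_le_eq => a xa.
  by apply: contrapT => nya; exact: (nsep a).
exists (stone_set a, stone_set (~` a)%O).
  by rewrite !inE stone_setC; split.
by split; [exact: stone_set_open|exact: stone_set_open|rewrite stone_setC setICr].
Qed.

Lemma ult_zero_dim : zero_dim (ult A).
Proof.
move=> W x oW Wx; have [c [xc cW]] := stone_set_basis oW Wx.
by exists (stone_set c); split => //; exact: stone_set_clopen.
Qed.

(* A cluster point of a proper filter [G] is an ultrafilter extending the
   filter of those [a] whose [stone_set] belongs to [G]. *)
Lemma ult_compact : compact [set: ult A].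
Proof.
move=> G PG _; pose x0 : set A := [set a | G (stone_set a)].
have fx0 : ba_filter x0.
  split; first by rewrite /x0 /= stone_setT; exact: filterT.
  - by move=> a b Ga /stone_set_subset ab; exact: filterS Ga.
  - by move=> a b Ga Gb; rewrite /x0 /= stone_setI; exact: filterI.
have nx0b : ~ x0 \bot%O by rewrite /x0 /= stone_set0; exact: filter_not_empty.
have [z x0z] := ult_ext_proper fx0 nx0b.
exists z; split => // B C GB; rewrite nbhsE => -[O [oO Oz] OC].
have [c [zc cO]] := stone_set_basis oO Oz.
apply: contrapT => /set0P /negP; rewrite negbK => /eqP BC0.
suff /x0z /(ba_ufC _ (ultP z)) : x0 (~` c)%O by [].
rewrite /x0 /= stone_setC; apply: filterS GB => y By yc.
have : (B `&` C) y by split => //; apply: OC; exact: cO.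
by rewrite BC0.
Qed.

Lemma ult_stone : stone_space (ult A).
Proof. by split; [exact: ult_compact|exact: ult_hausdorff|exact: ult_zero_dim]. Qed.

End UltrafilterSpace.

(** * Stone spaces and closed relations *)

Lemma compact_avoid (X : topologicalType) (P : set (set X)) (L : set X) :
  compact [set: X] -> closed L -> P setT ->
  (forall V W, P V -> P W -> P (V `&` W)) -> (forall W, P W -> closed W) ->
  (forall z, L z -> exists2 W, P W & ~ W z) ->
  exists2 W, P W & W `&` L = set0.
Proof.
move=> cX cL PT PI Pcl sepL; apply: contrapT => /forall2NP meetL.
have FG : Filter (filter_from P (fun W => W `&` L)).
  apply: filter_from_filter; first by exists setT.
  move=> V W PV PW; exists (V `&` W); first exact: PI.
  by move=> z [[Vz Wz] Lz].
have PG : ProperFilter (filter_from P (fun W => W `&` L)).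
  apply: filter_from_proper => W PW; apply/set0P/negP => /eqP WL.
  by case: (meetL W).
have [z [_ clz]] := cX _ PG filterT.
have WLz W : P W -> (W `&` L) z.
  by move=> PW; apply: (closedI (Pcl W PW) cL) => C Cz; apply: clz Cz; exists W.
have [W PW nWz] := sepL z (WLz _ PT).2.
by have [] := WLz W PW.
Qed.

Lemma open_box_closed_rel (X Y : topologicalType) (R : X -> Y -> Prop) :
  (forall x y, ~ R x y -> exists P Q, [/\ open P, open Q, P x, Q y &
     forall x' y', P x' -> Q y' -> ~ R x' y']) -> closed_rel R.
Proof.
move=> box; rewrite /closed_rel -openC openE => -[x y] /= nR.
have [P [Q [oP oQ Px Qy PQ]]] := box x y nR.
exists (P, Q); first by split; apply: open_nbhs_nbhs; split.
by case=> x' y' [/= Px' Qy']; exact: PQ.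
Qed.

Lemma closed_rel_converse (X Y : topologicalType) (R : X -> Y -> Prop) :
  closed_rel R -> closed_rel (fun y x => R x y).
Proof.
move=> cR; rewrite /closed_rel.
have -> : [set p : Y * X | R p.2 p.1] =
  unstable.swap @^-1` [set p : X * Y | R p.1 p.2] by [].
by apply: preimage_closed => // p _; exact: swap_continuous.
Qed.

Lemma closed_rel_img (X Y : topologicalType) (R : X -> Y -> Prop) (F : set X) :
  compact [set: X] -> compact [set: Y] -> hausdorff_space Y ->
  closed_rel R -> closed F -> closed (rel_img R F).
Proof.
move=> cX cY hY cR cF.
have -> : rel_img R F = snd @` ([set p : X * Y | R p.1 p.2] `&` (F `*` setT)).
  apply/seteqP; split => [y [x Fx Rxy]|_ [[x y] [/= Rxy [Fx _]] <-]].
    by exists (x, y).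
  by exists x.
apply: compact_closed hY _; apply: continuous_compact.
  by apply: continuous_subspaceT => p; exact: cvg_snd.
rewrite setIC; apply: compact_closedI => //.
by apply: compact_setX => //; exact: subclosed_compact cF cX _.
Qed.

Section StoneSeparation.
Variables (X : topologicalType) (stoneX : stone_space X).

Lemma stone_compact : compact [set: X]. Proof. by case: stoneX. Qed.

Lemma stone_hausdorff : hausdorff_space X. Proof. by case: stoneX. Qed.

Lemma stone_closed1 (x : X) : closed [set x].
Proof. exact/accessible_closed_set1/hausdorff_accessible/stone_hausdorff. Qed.

Lemma stone_sep_point_closed (K : set X) x : closed K -> ~ K x ->
  exists U, [/\ clopen U, U x & U `<=` ~` K].
Proof. by case: stoneX => _ _ zd cK; apply: zd; exact: closed_openC. Qed.

Lemma stone_sep_points (x y : X) : x <> y -> exists U, [/\ clopen U, U x & ~ U y].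
Proof.
move=> nxy; have [U [cU Ux UK]] := stone_sep_point_closed (@stone_closed1 y) nxy.
by exists U; split => // Uy; exact: UK Uy _.
Qed.

Lemma stone_sep_closed_point (K : set X) y : closed K -> ~ K y ->
  exists W, [/\ clopen W, K `<=` W & ~ W y].
Proof.
move=> cK nKy.
have [V [cV Vy] VK] : exists2 V, clopen V /\ V y & V `&` K = set0.
  apply: (@compact_avoid _ (fun V => clopen V /\ V y) K stone_compact cK).
  - by split; first exact: clopenT.
  - by move=> V W [cV Vy] [cW Wy]; split; first exact: clopenI.
  - by move=> V [[]].
  - move=> z Kz; have [|U [cU Uy nUz]] := @stone_sep_points y z.
      by move=> yz; apply: nKy; rewrite yz.
    by exists U.
exists (~` V); split; [exact: clopenC| |by apply].
by move=> z Kz Vz; have : (V `&` K) z by []; rewrite VK.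
Qed.

Lemma stone_sep_closed (K L : set X) : closed K -> closed L -> K `&` L = set0 ->
  exists W, [/\ clopen W, K `<=` W & W `&` L = set0].
Proof.
move=> cK cL KL.
have [W [cW KW] WL] : exists2 W, clopen W /\ K `<=` W & W `&` L = set0.
  apply: (@compact_avoid _ (fun W => clopen W /\ K `<=` W) L stone_compact cL).
  - by split; first exact: clopenT.
  - move=> V W [cV KV] [cW KW]; split; first exact: clopenI.
    by move=> z Kz; split; [exact: KV|exact: KW].
  - by move=> W [[]].
  - move=> z Lz; have [|W [cW KW nWz]] := stone_sep_closed_point cK (y := z).
      by move=> Kz; have : (K `&` L) z by []; rewrite KL.
    by exists W.
by exists W.
Qed.

End StoneSeparation.

Lemma closed_rel_clopen_sep (X Y : topologicalType) (R : X -> Y -> Prop) x y :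
  stone_space X -> stone_space Y -> closed_rel R -> ~ R x y ->
  exists U V, [/\ clopen U, clopen V, U x, ~ V y & rel_img R U `<=` V].
Proof.
move=> stoneX stoneY cR nRxy.
have cRx : closed (rel_img R [set x]).
  apply: closed_rel_img => //; [exact: stone_compact|exact: stone_compact|
    exact: stone_hausdorff|exact: stone_closed1].
have [|V [cV Vy VRx]] := stone_sep_point_closed stoneY cRx (x := y).
  by case=> x' /= ->.
have cRV : closed (rel_img (fun y x => R x y) V).
  apply: closed_rel_img => //; [exact: stone_compact|exact: stone_compact|
    exact: stone_hausdorff|exact: closed_rel_converse|by case: cV].
have [|U [cU Ux URV]] := stone_sep_point_closed stoneX cRV (x := x).
  by case=> y' Vy' Rxy'; apply: (VRx y' Vy'); exists x.
exists U, (~` V); split => //; first exact: clopenC.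
by move=> y' [x' Ux' Rx'y'] Vy'; apply: (URV x' Ux'); exists y'.
Qed.

(** * The functors on morphisms *)

Lemma clop_leE (X : topologicalType) (U V : clop X) :
  (U <= V)%O <-> clop_val U `<=` clop_val V.
Proof. by rewrite -Order.le_val /= subsetEset. Qed.

Lemma clopP (X : topologicalType) (U : clop X) : clopen (clop_val U).
Proof. exact/asboolP/clop_prop. Qed.

Definition mk_clop (X : topologicalType) (U : set X) (cU : clopen U) : clop X :=
  Clop (asboolT cU).

Section ClopMorphisms.
Variables (X Y : topologicalType) (R : X -> Y -> Prop).

Lemma S_of_subordination : subordination (S_of R).
Proof.
rewrite /S_of; split.
- by split => // y [x].
- by move=> U V W UW VW y [x [Ux|Vx] Rxy]; [apply: UW|apply: VW]; exists x.
- by move=> U V W UV UW y Uy; split; [exact: UV|exact: UW].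
- move=> U U' V V' /clop_leE UU' U'V /clop_leE VV' y [x Ux Rxy].
  by apply: VV'; apply: U'V; exists x => //; exact: UU'.
Qed.

End ClopMorphisms.

Lemma S_of_id (X : topologicalType) : rel_eq (S_of (@rel_id X)) (@ba_le _ (clop X)).
Proof.
move=> U V; rewrite /ba_le clop_leE /S_of; split.
  by move=> UV x Ux; apply: UV; exists x.
by move=> UV y [x Ux <-]; exact: UV.
Qed.

(* The clopen interpolant [W] separates [R1[U]] from the [R2]-preimage of the
   complement of [V]; both are closed because relations on compact spaces
   map closed sets to closed sets. *)
Lemma S_of_comp (X Y Z : topologicalType) (R1 : X -> Y -> Prop) (R2 : Y -> Z -> Prop) :
  stone_space X -> stone_space Y -> stone_space Z ->
  closed_rel R1 -> closed_rel R2 ->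
  rel_eq (S_of (rel_comp R2 R1)) (rel_comp (S_of R2) (S_of R1)).
Proof.
move=> stoneX stoneY stoneZ cR1 cR2 U V; split; last first.
  case=> W [UW WV] z [x Ux [y [R1xy R2yz]]].
  by apply: WV; exists y => //; apply: UW; exists x.
move=> UV.
have cK : closed (rel_img R1 (clop_val U)).
  apply: closed_rel_img => //; [exact: stone_compact|exact: stone_compact|
    exact: stone_hausdorff|by case: (clopP U)].
have cL : closed (rel_img (fun z y => R2 y z) (~` clop_val V)).
  apply: closed_rel_img => //; [exact: stone_compact|exact: stone_compact|
    exact: stone_hausdorff|exact: closed_rel_converse|].
  by rewrite -openC setCK; case: (clopP V).
have [|W [cW KW WL]] := stone_sep_closed stoneY cK cL.
  apply/seteqP; split => // y [[x Ux R1xy] [z nVz R2yz]].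
  by apply: nVz; apply: UV; exists x => //; exists y.
exists (mk_clop cW); split; first by move=> y; exact: KW.
move=> z [y Wy R2yz]; apply: contrapT => nVz.
have : (W `&` rel_img (fun z y => R2 y z) (~` clop_val V)) y by split => //; exists z.
by rewrite WL.
Qed.

Lemma R_of_closed d1 (A : ctbDistrLatticeType d1) d2 (B : ctbDistrLatticeType d2)
  (S : A -> B -> Prop) : closed_rel (R_of S).
Proof.
apply: open_box_closed_rel => x y nRxy.
have [c [[a xa aSc] nyc]] : exists c, rel_img S (ult_val x) c /\ ~ ult_val y c.
  apply: contrapT => /forallNP nsep; apply: nRxy => c Sxc.
  by apply: contrapT => nyc; exact: (nsep c).
exists (stone_set a), (stone_set (~` c)%O); rewrite stone_setC.
split; [exact: stone_set_open|by rewrite openC; case: (stone_set_clopen c)|by []|by []|].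
by move=> x' y' x'a ny'c Rx'y'; apply: ny'c; apply: Rx'y'; exists a.
Qed.

Section UltMorphisms.
Variables (d1 : Order.disp_t) (A : ctbDistrLatticeType d1).
Variables (d2 : Order.disp_t) (B : ctbDistrLatticeType d2).
Variables (S : A -> B -> Prop) (subS : subordination S).

Lemma subordination_img_filter (x : set A) : ba_filter x -> ba_filter (rel_img S x).
Proof.
case: subS => [[_ S11] _ SI Smono] fx; split.
- by exists \top%O => //; exact: ba_filterT.
- by move=> b c [a xa aSb] bc; exists a => //; exact: Smono (lexx a) aSb bc.
- move=> b c [a xa aSb] [a' xa' a'Sc]; exists (a `&` a')%O; first exact: ba_filterI.
  by apply: SI; [apply: Smono aSb (lexx b)|apply: Smono a'Sc (lexx c)];
    rewrite ?leIl ?leIr.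
Qed.

Definition subordination_preimg (J : set B) : set A := [set a | exists2 b, J b & S a b].

Lemma subordination_preimg_ideal J : ba_ideal J -> ba_ideal (subordination_preimg J).
Proof.
case: subS => [[S00 _] SU _ Smono] iJ; split.
- by exists \bot%O => //; case: iJ.
- by move=> a a' [b Jb a'Sb] aa'; exists b => //; exact: Smono aa' a'Sb (lexx b).
- move=> a a' [b Jb aSb] [b' Jb' a'Sb']; exists (b `|` b')%O; first exact: ba_idealU.
  by apply: SU; [apply: Smono (lexx a) aSb _|apply: Smono (lexx a') a'Sb' _];
    rewrite ?leUl ?leUr.
Qed.

Lemma R_of_ext (x : ult A) (J : set B) : ba_ideal J ->
  (forall a b, ult_val x a -> S a b -> ~ J b) ->
  exists y : ult B, R_of S x y /\ forall b, ult_val y b -> ~ J b.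
Proof.
move=> iJ dxJ.
have fSx := subordination_img_filter (ba_uf_filter (ultP x)).
have [|y [Sxy dyJ]] := ult_ext fSx iJ; last by exists y.
by move=> b [a xa aSb]; exact: dxJ aSb.
Qed.

(* If [a S c] fails, [a] generates a filter avoiding the ideal of elements
   subordinate to [c]; an ultrafilter [x] through it has an [R_of S]-successor
   missing [c]. *)
Lemma R_of_stone_set a c :
  rel_img (R_of S) (stone_set a) `<=` stone_set c <-> S a c.
Proof.
case: (subS) => _ _ _ Smono; split; last first.
  by move=> aSc y [x xa Rxy]; apply: Rxy; exists a.
move=> RaC; apply: contrapT => naSc.
have iI := subordination_preimg_ideal (downset_ideal c).
have [|x [ax dxI]] := ult_ext (upset_filter a) iI.
  by move=> e ae [b bc eSb]; apply: naSc; exact: Smono ae eSb bc.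
have [|y [Rxy dyc]] := R_of_ext (downset_ideal c) (x := x).
  by move=> a' b xa' a'Sb bc; apply: (dxI a' xa'); exists b.
apply: (dyc c); last exact: lexx.
by apply: RaC; exists x => //; apply: ax; exact: lexx.
Qed.

End UltMorphisms.

Lemma R_of_le d (A : ctbDistrLatticeType d) (x y : ult A) :
  R_of (@ba_le _ A) x y <-> x = y.
Proof.
split => [xy|<- b [a xa ab]]; last exact: ba_filterS (ba_uf_filter (ultP x)) xa ab.
by apply: ult_le_eq => a xa; apply: xy; exists a => //; exact: lexx.
Qed.

Lemma R_of_comp d1 (A : ctbDistrLatticeType d1) d2 (B : ctbDistrLatticeType d2)
  d3 (C : ctbDistrLatticeType d3) (S1 : A -> B -> Prop) (S2 : B -> C -> Prop) :
  subordination S1 -> subordination S2 ->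
  rel_eq (R_of (rel_comp S2 S1)) (rel_comp (R_of S2) (R_of S1)).
Proof.
move=> subS1 subS2 x z; split; last first.
  case=> y [Rxy Ryz] c [a xa [b [aSb bSc]]].
  by apply: Ryz; exists b => //; apply: Rxy; exists a.
move=> Rxz; have iJ := subordination_preimg_ideal subS2 (ba_uf_compl_ideal (ultP z)).
have [|y [Rxy dyJ]] := R_of_ext subS1 iJ (x := x).
  by move=> a b xa aSb [c nzc bSc]; apply: nzc; apply: Rxz; exists a => //; exists b.
exists y; split => // c [b yb bSc]; apply: contrapT => nzc.
by apply: (dyJ b yb); exists c.
Qed.

(** * The natural isomorphisms *)

Lemma ba_iso_embedding d1 (A : ctbDistrLatticeType d1) d2 (B : ctbDistrLatticeType d2)
  (f : A -> B) : {mono f : a a' / (a <= a')%O} -> (forall b, exists a, b = f a) ->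
  ba_iso (fun a b => (f a <= b)%O).
Proof.
move=> fle fsurj; split.
  split.
  - by split; [have [e ->] := fsurj \bot%O; rewrite fle le0x|exact: lex1].
  - by move=> a a' c; have [e ->] := fsurj c; rewrite !fle leUx => -> ->.
  - by move=> a c c' ac ac'; rewrite lexI ac ac'.
  - move=> a a' c c' aa' a'c cc'.
    by rewrite (le_trans _ cc') // (le_trans _ a'c) // fle.
exists (fun b a => (b <= f a)%O); split.
- split.
  + by split; [exact: le0x|have [e ->] := fsurj \top%O; rewrite fle lex1].
  + by move=> b b' a ba b'a; rewrite leUx ba b'a.
  + by move=> b a a'; have [e ->] := fsurj b; rewrite !fle lexI => -> ->.
  + by move=> b b' a a' bb' b'a aa'; rewrite (le_trans bb') // (le_trans b'a) // fle.
- move=> a a'; rewrite /ba_le; split => [[b [ab ba']]|aa'].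
    by rewrite -fle (le_trans ab ba').
  by exists (f a); rewrite lexx fle.
- move=> b b'; rewrite /ba_le; split => [[a [ba ab']]|bb']; first exact: le_trans ab'.
  by have [a eb] := fsurj b; exists a; rewrite -eb lexx bb'.
Qed.

Section StoneRepresentation.
Variables (d : Order.disp_t) (A : ctbDistrLatticeType d).

Lemma clopen_stone_set (W : set (ult A)) : clopen W -> exists c, W = stone_set c.
Proof.
move=> [oW cW].
have [_ [[c ->] nWc] cW0] : exists2 V,
    (exists c, V = stone_set c) /\ ~` W `<=` V & V `&` W = set0.
  apply: (@compact_avoid _ _ W (@ult_compact _ A) cW).
  - by split => //; exists \top%O; rewrite stone_setT.
  - move=> _ _ [[a ->] Wa] [[b ->] Wb]; split; first by exists (a `&` b)%O; rewrite stone_setI.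
    by move=> x nWx; split; [exact: Wa|exact: Wb].
  - by move=> _ [[a ->] _]; case: (stone_set_clopen a).
  - move=> z Wz; have [c [zc cW']] := stone_set_basis oW Wz.
    exists (stone_set (~` c)%O); last by rewrite stone_setC; apply.
    split; first by exists (~` c)%O.
    by rewrite stone_setC => x nWx cx; apply: nWx; exact: cW'.
exists (~` c)%O; rewrite stone_setC; apply/seteqP; split => x.
- by move=> Wx cx; have : (stone_set c `&` W) x by []; rewrite cW0.
- by move=> ncx; apply: contrapT => nWx; exact: ncx (nWc x nWx).
Qed.

Definition stone_clop a : clop (ult A) := mk_clop (stone_set_clopen a).

Lemma stone_clop_le : {mono stone_clop : a b / (a <= b)%O}.
Proof.
move=> a b; apply/idP/idP => ab.
  exact/stone_set_subset/(clop_leE (stone_clop a) (stone_clop b)).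
exact/(clop_leE (stone_clop a) (stone_clop b))/stone_set_subset.
Qed.

Lemma stone_clop_surj (W : clop (ult A)) : exists a, W = stone_clop a.
Proof. by have [a Wa] := clopen_stone_set (clopP W); exists a; apply: val_inj. Qed.

Definition stone_clop_rel : A -> clop (ult A) -> Prop := fun a W => (stone_clop a <= W)%O.

Lemma stone_clop_rel_iso : ba_iso stone_clop_rel.
Proof. exact: ba_iso_embedding stone_clop_le stone_clop_surj. Qed.

End StoneRepresentation.

Lemma stone_clop_rel_natural d1 (A : ctbDistrLatticeType d1) d2 (B : ctbDistrLatticeType d2)
  (S : A -> B -> Prop) : subordination S ->
  rel_eq (rel_comp (S_of (R_of S)) (@stone_clop_rel _ A)) (rel_comp (@stone_clop_rel _ B) S).
Proof.
move=> subS a W'; split.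
  case=> W [/clop_leE aW RWW']; have [c eW'] := stone_clop_surj W'.
  exists c; split; last by rewrite eW'; exact: lexx.
  rewrite eW' in RWW'.
  by apply/(R_of_stone_set subS) => y [x xa Rxy]; apply: RWW'; exists x => //; exact: aW.
case=> b [aSb /clop_leE bW']; exists (stone_clop a); split; first exact: lexx.
by move=> y Ray; apply: bW'; exact: (R_of_stone_set subS a b).2 aSb y Ray.
Qed.

Section PointUltrafilters.
Variable X : topologicalType.

Definition clop_nbhs (x : X) : set (clop X) := [set U | clop_val U x].

Lemma clop_nbhs_uf x : ba_ultrafilter (clop_nbhs x).
Proof.
apply: prime_ba_ultrafilter => [|//|U]; first by split => // U V Ux /clop_leE; apply.
by have [Ux|nUx] := pselect (clop_val U x); [left|right].
Qed.

Definition ult_point x : ult (clop X) := mk_ult (clop_nbhs_uf x).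

Lemma ult_point_sep (u : ult (clop X)) x : u <> ult_point x ->
  exists U, ult_val u U /\ ~ clop_val U x.
Proof.
move=> nux; apply: contrapT => /forallNP nsep; apply: nux; apply: ult_le_eq => U uU.
by apply: contrapT => nUx; exact: (nsep U).
Qed.

Lemma ult_point_closed : closed_rel (fun x u => u = ult_point x).
Proof.
apply: open_box_closed_rel => x u /ult_point_sep [U [uU nUx]].
exists (~` clop_val U), (stone_set U); split => //.
- by rewrite openC; case: (clopP U).
- exact: stone_set_open.
- by move=> x' u' nUx' u'U u'x'; apply: nUx'; rewrite u'x' in u'U.
Qed.

Variable stoneX : stone_space X.

Lemma ult_point_inj : injective ult_point.
Proof.
move=> x x' xx'; apply: contrapT => nxx'.
have [U [cU Ux nUx']] := stone_sep_points stoneX nxx'.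
have : ult_val (ult_point x) (mk_clop cU) by [].
by rewrite xx'.
Qed.

Lemma ult_point_surj (u : ult (clop X)) : exists x, u = ult_point x.
Proof.
have fu := ba_uf_filter (ultP u).
suff [x ux] : exists x, forall U, ult_val u U -> clop_val U x.
  by exists x; apply: ult_le_eq.
apply: contrapT => /forallNP nx.
have [_ [U uU ->] U0] : exists2 W,
    (exists2 U, ult_val u U & W = clop_val U) & W `&` setT = set0.
  apply: (@compact_avoid _ _ setT (stone_compact stoneX) closedT).
  - by exists \top%O => //; exact: ba_filterT.
  - move=> _ _ [U uU ->] [V uV ->].
    by exists (U `&` V)%O => //; exact: ba_filterI.
  - by move=> _ [U _ ->]; case: (clopP U).
  - move=> z _; have /existsNP [U /not_implyP [uU nUz]] := nx z.
    by exists (clop_val U) => //; exists U.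
apply: (ba_uf_proper (ultP u)).
suff -> : (\bot%O : clop X) = U by [].
by apply: val_inj; rewrite /= -[clop_val U]setIT U0 botEset.
Qed.

End PointUltrafilters.

Lemma stone_iso_graph (X Y : topologicalType) (f : X -> Y) : injective f ->
  (forall y, exists x, y = f x) -> closed_rel (fun x y => y = f x) ->
  stone_iso (fun x y => y = f x).
Proof.
move=> finj fsurj cf; split => //.
exists (fun y x => y = f x); split; first exact: closed_rel_converse.
- move=> x x'; split => [[y [-> /finj]]|<-] //.
  by exists (f x).
- move=> y y'; split => [[x [-> ->]]|<-] //.
  by have [x ->] := fsurj y; exists x.
Qed.

Lemma ult_point_natural (X Y : topologicalType) (R : X -> Y -> Prop) :
  stone_space X -> stone_space Y -> closed_rel R ->
  rel_eq (rel_comp (R_of (S_of R)) (fun x u => u = ult_point x))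
         (rel_comp (fun y v => v = ult_point y) R).
Proof.
move=> stoneX stoneY cR x v; split; last first.
  case=> y [Rxy ->]; exists (ult_point x); split => //.
  by move=> V [U Ux RUV]; apply: RUV; exists x.
case=> _ [-> Rxv]; have [y ey] := ult_point_surj stoneY v; rewrite ey in Rxv *.
exists y; split => //; apply: contrapT => nRxy.
have [U [V [cU cV Ux nVy RUV]]] := closed_rel_clopen_sep stoneX stoneY cR nRxy.
have RV : ult_val (ult_point y) (mk_clop cV) by apply: Rxv; exists (mk_clop cU).
exact: nVy RV.
Qed.

Theorem corollary2p6 :
  (forall (X Y : topologicalType) (R : X -> Y -> Prop),
      stone_space X -> stone_space Y -> closed_rel R ->
      subordination (S_of R)) /\
  (forall X : topologicalType, stone_space X ->
      rel_eq (S_of (@rel_id X)) (@ba_le _ (clop X))) /\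
  (forall (X Y Z : topologicalType) (R1 : X -> Y -> Prop) (R2 : Y -> Z -> Prop),
      stone_space X -> stone_space Y -> stone_space Z ->
      closed_rel R1 -> closed_rel R2 ->
      rel_eq (S_of (rel_comp R2 R1)) (rel_comp (S_of R2) (S_of R1))) /\
  (forall (d : Order.disp_t) (A : ctbDistrLatticeType d), stone_space (ult A)) /\
  (forall (d1 : Order.disp_t) (A : ctbDistrLatticeType d1)
          (d2 : Order.disp_t) (B : ctbDistrLatticeType d2) (S : A -> B -> Prop),
      subordination S -> closed_rel (R_of S)) /\
  (forall (d : Order.disp_t) (A : ctbDistrLatticeType d),
      rel_eq (R_of (@ba_le _ A)) (@rel_id (ult A))) /\
  (forall (d1 : Order.disp_t) (A : ctbDistrLatticeType d1)
          (d2 : Order.disp_t) (B : ctbDistrLatticeType d2)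
          (d3 : Order.disp_t) (C : ctbDistrLatticeType d3)
          (S1 : A -> B -> Prop) (S2 : B -> C -> Prop),
      subordination S1 -> subordination S2 ->
      rel_eq (R_of (rel_comp S2 S1)) (rel_comp (R_of S2) (R_of S1))) /\
  (exists eta : forall X : topologicalType, X -> ult (clop X) -> Prop,
      forall X : topologicalType, stone_space X ->
        stone_iso (eta X) /\
        (forall (Y : topologicalType) (R : X -> Y -> Prop),
            stone_space Y -> closed_rel R ->
            rel_eq (rel_comp (R_of (S_of R)) (eta X)) (rel_comp (eta Y) R))) /\
  (exists eps : forall (d : Order.disp_t) (A : ctbDistrLatticeType d),
                  A -> clop (ult A) -> Prop,
      forall (d : Order.disp_t) (A : ctbDistrLatticeType d),
        ba_iso (eps d A) /\
        (forall (d' : Order.disp_t) (B : ctbDistrLatticeType d')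
                (S : A -> B -> Prop),
            subordination S ->
            rel_eq (rel_comp (S_of (R_of S)) (eps d A))
                   (rel_comp (eps d' B) S))).
Proof.
split; first by move=> X Y R _ _ _; exact: S_of_subordination.
split; first by move=> X _; exact: S_of_id.
split; first by move=> X Y Z R1 R2; exact: S_of_comp.
split; first by move=> d A; exact: ult_stone.
split; first by move=> d1 A d2 B S _; exact: R_of_closed.
split; first by move=> d A x y; exact: R_of_le.
split; first by move=> d1 A d2 B d3 C S1 S2; exact: R_of_comp.
split.
  exists (fun X x u => u = @ult_point X x) => X stoneX; split.
    exact: stone_iso_graph (ult_point_inj stoneX) (ult_point_surj stoneX) (@ult_point_closed X).
  by move=> Y R stoneY cR; exact: ult_point_natural.
exists stone_clop_rel => d A; split; first exact: stone_clop_rel_iso.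
by move=> d' B S subS; exact: stone_clop_rel_natural.
Qed.
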